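(* Let $g(t)$, $t\in[0,T)$, be the maximal Ricci flow solution on $S^1\times S^3$ of the form $g(t)=\phi^2dz^2+a^2\omega^1\otimes\omega^1+b^2\omega^2\otimes\omega^2+c^2\omega^3\otimes\omega^3$ starting from initial data with $0<a\le b\le c$, and let $\hat c(t)=\max_s c(s,t)$. Then $\hat c(t)^2\le -4t+\hat c(0)^2$.
   Context: $S^3=SU(2)$ carries a global left-invariant frame $E_1,E_2,E_3$ with $[E_i,E_j]=-2\epsilon_{ijk}E_k$ and dual coframe $\omega^i$; $z\in S^1=[0,2\pi)$, $\phi,a,b,c$ positive smooth $2\pi$-periodic functions; $s$ is the arclength coordinate $ds=\phi\,dz$. The Ricci flow $\partial_tg=-2\mathrm{Ric}(g)$ preserves this form. *)

From Stdlib Require Import Reals.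
From Coquelicot Require Import Coquelicot.
Open Scope R_scope.

(* A function f : R -> R -> R is read as f z t, with z the (lifted) circle
   coordinate and t the time. *)

Definition dz (f : R -> R -> R) (z t : R) : R := Derive (fun y => f y t) z.
Definition dt (f : R -> R -> R) (z t : R) : R := Derive (fun s => f z s) t.

(* arclength derivatives: ds = phi dz, so d/ds = (1/phi) d/dz *)
Definition ds (phi f : R -> R -> R) (z t : R) : R := dz f z t / phi z t.
Definition dss (phi f : R -> R -> R) (z t : R) : R :=
  dz (ds phi f) z t / phi z t.

Definition jcont0 (g : R -> R -> R) (T : R) : Prop :=
  forall z t, 0 <= t < T -> forall eps, 0 < eps -> exists del, 0 < del /\
    forall z' t', 0 <= t' < T -> Rabs (z' - z) < del -> Rabs (t' - t) < del ->
      Rabs (g z' t' - g z t) < eps.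

Definition jcontpos (g : R -> R -> R) (T : R) : Prop :=
  forall z t, 0 < t < T -> forall eps, 0 < eps -> exists del, 0 < del /\
    forall z' t', 0 < t' < T -> Rabs (z' - z) < del -> Rabs (t' - t) < del ->
      Rabs (g z' t' - g z t) < eps.

Definition regular (f : R -> R -> R) (T : R) : Prop :=
  (forall z t, 0 <= t < T -> ex_derive (fun y => f y t) z) /\
  (forall z t, 0 <= t < T -> ex_derive (fun y => dz f y t) z) /\
  (forall z t, 0 < t < T -> ex_derive (fun s => f z s) t) /\
  jcont0 f T /\ jcont0 (dz f) T /\ jcont0 (dz (dz f)) T /\
  jcontpos (dt f) T /\
  (forall z t, 0 <= t < T -> f (z + 2 * PI) t = f z t) /\
  (forall z t, 0 <= t < T -> 0 < f z t).

(* Ricci flow of g = phi^2 dz^2 + a^2 w1^2 + b^2 w2^2 + c^2 w3^2 on S^1 x S^3,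
   with [E_i,E_j] = -2 eps_ijk E_k, written out as the equivalent PDE system
   d/dt g = -2 Ric(g) for the warping functions (s = arclength, ds = phi dz). *)
Definition ricci_flow_S1S3 (phi a b c : R -> R -> R) (T : R) : Prop :=
  regular phi T /\ regular a T /\ regular b T /\ regular c T /\
  forall z t, 0 < t < T ->
    dt phi z t = phi z t * (dss phi a z t / a z t + dss phi b z t / b z t
                             + dss phi c z t / c z t) /\
    dt a z t = dss phi a z t
               + ds phi a z t * (ds phi b z t / b z t + ds phi c z t / c z t)
               + 2 * ((b z t ^ 2 - c z t ^ 2) ^ 2 - a z t ^ 4)
                   / (a z t * b z t ^ 2 * c z t ^ 2) /\
    dt b z t = dss phi b z t
               + ds phi b z t * (ds phi a z t / a z t + ds phi c z t / c z t)
               + 2 * ((a z t ^ 2 - c z t ^ 2) ^ 2 - b z t ^ 4)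
                   / (a z t ^ 2 * b z t * c z t ^ 2) /\
    dt c z t = dss phi c z t
               + ds phi c z t * (ds phi a z t / a z t + ds phi b z t / b z t)
               + 2 * ((a z t ^ 2 - b z t ^ 2) ^ 2 - c z t ^ 4)
                   / (a z t ^ 2 * b z t ^ 2 * c z t).

(* hat c(t) = max over the circle of c(., t) (a sup, attained by continuity
   and periodicity) *)
Definition chat (c : R -> R -> R) (t : R) : R :=
  real (Lub_Rbar (fun x => exists z, x = c z t)).

From Stdlib Require Import Reals Lra ZArith Classical ClassicalEpsilon.
From Coquelicot Require Import Coquelicot.
Open Scope R_scope.

(* Let M(t) be the largest of the spatial maxima of a, b and c, and let f be a component
   realising M(t) at a point z where f(., t) is maximal.  There ds f = 0, dss f <= 0, and the
   other two components are at most f, which makes the reaction term of the equation for f at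
   most -2/f; hence d/dt (f^2) <= -4 at (z, t), so M^2 + (4 - delta) t is strictly larger
   slightly before any time t > 0.  Since M is continuous in time, a first-time argument gives
   M(t)^2 + (4 - delta) t <= M(0)^2, and M(0) = c-hat(0) by the initial ordering, while
   c-hat <= M.  Finally let delta -> 0. *)

Lemma is_derive_pos_sign (F : R -> R) (r l : R) :
  is_derive F r l -> 0 < l ->
  exists eta, 0 < eta /\
    forall s, s <> r -> Rabs (s - r) < eta -> 0 < (F s - F r) * (s - r).
Proof.
  intros hF hl. apply is_derive_Reals in hF.
  destruct (hF (l / 2)) as [eta heta]; [lra|].
  exists eta; split; [apply cond_pos|]. intros s hs hsr.
  assert (hh : s - r <> 0) by lra.
  specialize (heta (s - r) hh hsr). replace (r + (s - r)) with s in heta by ring.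
  apply Rabs_def2 in heta.
  replace ((F s - F r) * (s - r)) with ((F s - F r) / (s - r) * (s - r) ^ 2)
    by (field; lra).
  apply Rmult_lt_0_compat; [lra | apply pow2_gt_0; lra].
Qed.

Lemma is_derive_neg_left (F : R -> R) (r l : R) :
  is_derive F r l -> l < 0 ->
  exists eta, 0 < eta /\ forall s, r - eta < s < r -> F r < F s.
Proof.
  intros hF hl.
  destruct (is_derive_pos_sign (fun x => - F x) r (- l)) as [eta [heta H]].
  { now apply (is_derive_opp F). }
  { lra. }
  exists eta; split; [exact heta|]. intros s hs.
  specialize (H s ltac:(lra) ltac:(rewrite Rabs_left; lra)). nra.
Qed.

Lemma Derive_eq_0_at_max (g : R -> R) (z : R) :
  ex_derive g z -> (forall y, g y <= g z) -> Derive g z = 0.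
Proof.
  intros hd hmax.
  pose (pr := exist _ (Derive g z) (proj1 (is_derive_Reals _ _ _) (Derive_correct _ _ hd))
                : derivable_pt g z).
  rewrite <- (Derive_Reals g z pr).
  apply (deriv_maximum g (z - 1) (z + 1)); [lra | lra | intros; apply hmax].
Qed.

Lemma Derive2_le_0_at_max (g : R -> R) (z : R) :
  (forall y, ex_derive g y) -> ex_derive (Derive g) z ->
  (forall y, g y <= g z) -> Derive (Derive g) z <= 0.
Proof.
  intros hd hd2 hmax. apply Rnot_lt_le. intros hpos.
  assert (hz : Derive g z = 0) by (apply Derive_eq_0_at_max; auto).
  destruct (is_derive_pos_sign (Derive g) z _ (Derive_correct _ _ hd2) hpos)
    as [eta [heta Hsign]].
  assert (hincr : forall y, z < y < z + eta -> 0 < Derive g y).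
  { intros y hy. specialize (Hsign y ltac:(lra) ltac:(rewrite Rabs_right; lra)).
    rewrite hz in Hsign. nra. }
  pose (pr := fun y => exist _ (Derive g y)
                (proj1 (is_derive_Reals _ _ _) (Derive_correct _ _ (hd y))) : derivable_pt g y).
  assert (g z < g (z + eta / 2)).
  { apply (derive_increasing_interv z (z + eta / 2) g pr); try lra.
    intros y hy. rewrite Derive_Reals. apply hincr. lra. }
  specialize (hmax (z + eta / 2)). lra.
Qed.

Lemma ds_dss_at_max (phi f : R -> R -> R) (z t : R) :
  (forall y, ex_derive (fun x => f x t) y) -> ex_derive (fun y => dz f y t) z ->
  ex_derive (fun y => phi y t) z -> 0 < phi z t ->
  (forall y, f y t <= f z t) ->
  ds phi f z t = 0 /\ dss phi f z t <= 0.
Proof.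
  intros hf hf2 hphi hpos hmax.
  assert (h1 : dz f z t = 0) by (apply Derive_eq_0_at_max; auto).
  assert (h2 : Derive (fun y => dz f y t) z <= 0)
    by (apply (Derive2_le_0_at_max (fun x => f x t)); auto).
  unfold dss, ds. split.
  - rewrite h1. unfold Rdiv; ring.
  - unfold dz at 1. rewrite Derive_div by (auto; lra). rewrite h1.
    replace ((Derive (fun y => dz f y t) z * phi z t - 0 * Derive (fun y => phi y t) z)
               / phi z t ^ 2 / phi z t)
      with (Derive (fun y => dz f y t) z / phi z t ^ 2) by (field; lra).
    apply Rmult_le_0_r; [exact h2|]. left. apply Rinv_0_lt_compat, pow_lt, hpos.
Qed.

Definition reaction (x y p : R) : R :=
  2 * ((x ^ 2 - y ^ 2) ^ 2 - p ^ 4) / (x ^ 2 * y ^ 2 * p).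

Lemma reaction_bound (x y p : R) :
  0 < x -> 0 < y -> x <= p -> y <= p -> 2 * p * reaction x y p <= -4.
Proof.
  intros hx hy hxp hyp. unfold reaction.
  assert (hX : 0 < x ^ 2 * y ^ 2) by (apply Rmult_lt_0_compat; apply pow_lt; lra).
  assert (hsq : x ^ 4 - x ^ 2 * y ^ 2 + y ^ 4 <= p ^ 4).
  { assert (x ^ 2 <= p ^ 2) by (apply pow_incr; lra).
    assert (y ^ 2 <= p ^ 2) by (apply pow_incr; lra).
    destruct (Rle_dec (x ^ 2) (y ^ 2)); nra. }
  replace (2 * p * (2 * ((x ^ 2 - y ^ 2) ^ 2 - p ^ 4) / (x ^ 2 * y ^ 2 * p)))
    with (-4 + 4 * (x ^ 4 - x ^ 2 * y ^ 2 + y ^ 4 - p ^ 4) / (x ^ 2 * y ^ 2))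
    by (field; lra).
  assert (4 * (x ^ 4 - x ^ 2 * y ^ 2 + y ^ 4 - p ^ 4) / (x ^ 2 * y ^ 2) <= 0).
  { apply Rmult_le_0_r; [lra | left; apply Rinv_0_lt_compat, hX]. }
  lra.
Qed.

Lemma exists_shift_into_period (z : R) :
  exists n : Z, 0 <= z + 2 * PI * IZR n <= 2 * PI.
Proof.
  pose proof PI_RGT_0 as hpi.
  destruct (base_Int_part (z / (2 * PI))) as [h1 h2].
  exists (- Int_part (z / (2 * PI)))%Z. rewrite opp_IZR.
  set (n := IZR (Int_part (z / (2 * PI)))) in *.
  assert (hz : z = z / (2 * PI) * (2 * PI)) by (field; lra).
  split; nra.
Qed.

Lemma chat_eq_max (f : R -> R -> R) (t zm : R) :
  (forall z, f z t <= f zm t) -> chat f t = f zm t.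
Proof.
  intros hmax. unfold chat.
  rewrite (is_lub_Rbar_unique _ (Finite (f zm t))); [reflexivity|].
  split.
  - intros x [z ->]. apply hmax.
  - intros b hb. apply hb. now exists zm.
Qed.

Section PeriodicSlices.

Variables (f : R -> R -> R) (T : R).
Hypothesis f_cont : jcont0 f T.
Hypothesis f_periodic : forall z t, 0 <= t < T -> f (z + 2 * PI) t = f z t.

Lemma periodic_shift (n : Z) (z t : R) :
  0 <= t < T -> f (z + 2 * PI * IZR n) t = f z t.
Proof.
  intros ht. revert z. induction n using Z.peano_ind; intros z.
  - f_equal. simpl. ring.
  - rewrite <- Z.add_1_r, plus_IZR.
    replace (z + 2 * PI * (IZR n + 1)) with (z + 2 * PI * IZR n + 2 * PI) by ring.
    now rewrite f_periodic, IHn.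
  - rewrite <- Z.sub_1_r, minus_IZR.
    replace (z + 2 * PI * (IZR n - 1)) with (z - 2 * PI + 2 * PI * IZR n) by ring.
    rewrite IHn, <- (f_periodic (z - 2 * PI)) by exact ht. f_equal. ring.
Qed.

Lemma continuity_pt_slice (t z : R) :
  0 <= t < T -> continuity_pt (fun y => f y t) z.
Proof.
  intros ht eps heps. destruct (f_cont z t ht eps heps) as [d [hd H]].
  exists d. split; [exact hd|]. intros y [_ hy]. simpl in *. unfold R_dist in *.
  apply H; [exact ht | exact hy | rewrite Rminus_eq_0, Rabs_R0; exact hd].
Qed.

Lemma slice_max_attained (t : R) :
  0 <= t < T -> exists zm, forall z, f z t <= f zm t.
Proof.
  intros ht. pose proof PI_RGT_0.
  destruct (continuity_ab_maj (fun y => f y t) 0 (2 * PI)) as [zm [hmax _]].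
  { lra. }
  { intros y _. now apply continuity_pt_slice. }
  exists zm. intros z. destruct (exists_shift_into_period z) as [n hn].
  rewrite <- (periodic_shift n z t ht). now apply hmax.
Qed.

Lemma le_chat (z t : R) : 0 <= t < T -> f z t <= chat f t.
Proof.
  intros ht. destruct (slice_max_attained t ht) as [zm hzm].
  rewrite (chat_eq_max f t zm hzm). apply hzm.
Qed.

Lemma time_equicontinuous (r eps : R) :
  0 <= r < T -> 0 < eps ->
  exists d, 0 < d /\
    forall z s, 0 <= s < T -> Rabs (s - r) < d -> Rabs (f z s - f z r) < eps.
Proof.
  intros hr heps.
  assert (hdelta : forall z, {del : posreal | forall z' t', 0 <= t' < T ->
      Rabs (z' - z) < del -> Rabs (t' - r) < del -> Rabs (f z' t' - f z r) < eps / 2}).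
  { intros z. apply constructive_indefinite_description.
    destruct (f_cont z r hr (eps / 2)) as [del [hdel H]]; [lra|].
    now exists (mkposreal del hdel). }
  destruct (compactness_value_1d 0 (2 * PI) (fun z => proj1_sig (hdelta z))) as [d hd].
  exists d. split; [apply cond_pos|]. intros z s hs hsr.
  destruct (exists_shift_into_period z) as [n hn].
  rewrite <- (periodic_shift n z s hs), <- (periodic_shift n z r hr).
  apply NNPP. intros hfar. apply (hd _ hn). intros [z0 [_ [hz0 hd0]]]. apply hfar.
  pose proof (proj2_sig (hdelta z0) _ s hs hz0 ltac:(lra)) as Hs.
  pose proof (proj2_sig (hdelta z0) _ r hr hz0
                ltac:(rewrite Rminus_eq_0, Rabs_R0; apply cond_pos)) as Hr.
  apply Rabs_def2 in Hs, Hr. apply Rabs_def1; lra.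
Qed.

Lemma chat_continuous_on : continuous_on (fun s => 0 <= s < T) (chat f).
Proof.
  intros r hr. apply filterlim_locally. intros eps.
  destruct (time_equicontinuous r eps hr (cond_pos eps)) as [d [hd H]].
  exists (mkposreal d hd). intros s hsr hs.
  change (Rabs (s - r) < d) in hsr. change (Rabs (chat f s - chat f r) < eps).
  destruct (slice_max_attained s hs) as [zs hzs].
  destruct (slice_max_attained r hr) as [zr hzr].
  rewrite (chat_eq_max f s zs hzs), (chat_eq_max f r zr hzr).
  pose proof (H zs s hs hsr) as Hs. pose proof (H zr s hs hsr) as Hr.
  specialize (hzs zr). specialize (hzr zs).
  apply Rabs_def2 in Hs, Hr. apply Rabs_def1; lra.
Qed.

End PeriodicSlices.

Lemma filterlim_Rmax (x y : R) :
  filterlim (fun p : R * R => Rmax (fst p) (snd p))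
    (filter_prod (locally x) (locally y)) (locally (Rmax x y)).
Proof.
  apply filterlim_locally. intros eps.
  apply Filter_prod with (ball x eps) (ball y eps); try apply locally_ball.
  intros u v hu hv. change (Rabs (Rmax u v - Rmax x y) < eps).
  change (Rabs (u - x) < eps) in hu. change (Rabs (v - y) < eps) in hv.
  apply Rabs_def2 in hu, hv. apply Rabs_def1; unfold Rmax; repeat destruct Rle_dec; lra.
Qed.

Section ContinuousOn.

Variable D : R -> Prop.

Lemma continuous_on_comp_2 (f g : R -> R) (h : R -> R -> R) :
  continuous_on D f -> continuous_on D g ->
  (forall u v, filterlim (fun p : R * R => h (fst p) (snd p))
                 (filter_prod (locally u) (locally v)) (locally (h u v))) ->
  continuous_on D (fun x => h (f x) (g x)).
Proof. intros hf hg hh x hx. exact (filterlim_comp_2 f g h (hf x hx) (hg x hx) (hh _ _)). Qed.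

Lemma continuous_on_const (c : R) : continuous_on D (fun _ => c).
Proof. intros x _. apply filterlim_const. Qed.

Lemma continuous_on_id : continuous_on D (fun x => x).
Proof. intros x _. apply filter_le_within. Qed.

Lemma continuous_on_plus (f g : R -> R) :
  continuous_on D f -> continuous_on D g -> continuous_on D (fun x => f x + g x).
Proof. intros hf hg. apply (continuous_on_comp_2 f g Rplus hf hg), @filterlim_plus. Qed.

Lemma continuous_on_mult (f g : R -> R) :
  continuous_on D f -> continuous_on D g -> continuous_on D (fun x => f x * g x).
Proof. intros hf hg. apply (continuous_on_comp_2 f g Rmult hf hg), @filterlim_mult. Qed.

Lemma continuous_on_pow (f : R -> R) (n : nat) :
  continuous_on D f -> continuous_on D (fun x => f x ^ n).
Proof.
  intros hf. induction n as [|n IH]; simpl.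
  - apply continuous_on_const.
  - now apply continuous_on_mult.
Qed.

Lemma continuous_on_Rmax (f g : R -> R) :
  continuous_on D f -> continuous_on D g -> continuous_on D (fun x => Rmax (f x) (g x)).
Proof. intros hf hg. apply (continuous_on_comp_2 f g Rmax hf hg), filterlim_Rmax. Qed.

End ContinuousOn.

(* Continuous induction: look at the first time [r] at which [W] reaches [W t]. *)
Lemma le_initial_of_left_increase (W : R -> R) (T : R) :
  continuous_on (fun s => 0 <= s < T) W ->
  (forall r, 0 < r < T -> exists s, 0 <= s < r /\ W r < W s) ->
  forall t, 0 <= t < T -> W t <= W 0.
Proof.
  intros hW hleft t ht. apply Rnot_lt_le. intros hgt.
  set (E := fun s => 0 <= s <= t /\ W t <= W s).
  destruct (Glb_Rbar_correct E) as [hlb hglb].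
  assert (hEt : E t) by (split; [lra | apply Rle_refl]).
  assert (h0 : Rbar_le 0 (Glb_Rbar E)) by (apply hglb; intros x [hx _]; simpl; lra).
  assert (ht' : Rbar_le (Glb_Rbar E) t) by (apply hlb, hEt).
  destruct (Glb_Rbar E) as [r| |]; simpl in h0, ht'; try contradiction.
  assert (hr : 0 <= r < T) by lra.
  assert (hWr : W t <= W r).
  { apply Rnot_lt_le. intros hlt.
    destruct (hW r hr (fun y => y < W t) (open_lt _ _ hlt)) as [eps heps].
    assert (hlb' : is_lb_Rbar E (r + eps)).
    { intros e [he hWe]. simpl. apply Rnot_lt_le. intros hlt'.
      pose proof (hlb e (conj he hWe)) as hre. simpl in hre.
      assert (hball : ball r eps e) by (change (Rabs (e - r) < eps); apply Rabs_def1; lra).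
      specialize (heps e hball ltac:(lra)). simpl in heps. lra. }
    specialize (hglb _ hlb'). simpl in hglb. pose proof (cond_pos eps). lra. }
  assert (hr0 : 0 < r) by (destruct (Req_dec r 0) as [->|]; lra).
  destruct (hleft r ltac:(lra)) as [s [hs hWs]].
  assert (hEs : E s) by (split; lra).
  specialize (hlb s hEs). simpl in hlb. lra.
Qed.

Lemma regular_jcont0 {f : R -> R -> R} {T : R} : regular f T -> jcont0 f T.
Proof. intros reg. apply reg. Qed.

Lemma regular_periodic {f : R -> R -> R} {T : R} :
  regular f T -> forall z t, 0 <= t < T -> f (z + 2 * PI) t = f z t.
Proof. intros reg. apply reg. Qed.

Lemma regular_pos {f : R -> R -> R} {T : R} :
  regular f T -> forall z t, 0 <= t < T -> 0 < f z t.
Proof. intros reg. apply reg. Qed.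

Lemma regular_slice_max_attained {f : R -> R -> R} {T : R} (t : R) :
  regular f T -> 0 <= t < T -> exists zm, forall z, f z t <= f zm t.
Proof.
  intros reg. apply slice_max_attained; [apply regular_jcont0 | apply regular_periodic]; exact reg.
Qed.

Lemma regular_le_chat {f : R -> R -> R} {T : R} (z t : R) :
  regular f T -> 0 <= t < T -> f z t <= chat f t.
Proof.
  intros reg. apply le_chat; [apply regular_jcont0 | apply regular_periodic]; exact reg.
Qed.

Lemma chat_pos {f : R -> R -> R} {T : R} (t : R) : regular f T -> 0 <= t < T -> 0 < chat f t.
Proof.
  intros reg ht. apply Rlt_le_trans with (f 0 t).
  - exact (regular_pos reg 0 t ht).
  - exact (regular_le_chat 0 t reg ht).
Qed.

Lemma sq_left_increase_at_max (phi f : R -> R -> R) (T r k zm Q React : R) :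
  regular phi T -> regular f T -> 0 < r < T -> (forall z, f z r <= f zm r) ->
  dt f zm r = dss phi f zm r + ds phi f zm r * Q + React ->
  2 * f zm r * React + k < 0 ->
  exists s, 0 <= s < r /\ f zm r ^ 2 + k * r < f zm s ^ 2 + k * s.
Proof.
  intros regphi regf hr hmax hflow hneg.
  assert (hr0 : 0 <= r < T) by lra.
  assert (hfpos : 0 < f zm r) by exact (regular_pos regf zm r hr0).
  destruct regphi as [phi_z [_ [_ [_ [_ [_ [_ [_ phi_pos]]]]]]]].
  destruct regf as [f_z [f_zz [f_t _]]].
  destruct (ds_dss_at_max phi f zm r) as [hds hdss].
  { intros y. now apply f_z. }
  { now apply f_zz. }
  { now apply phi_z. }
  { now apply phi_pos. }
  { exact hmax. }
  assert (hder : is_derive (fun s => f zm s ^ 2 + k * s) r (2 * f zm r * dt f zm r + k)).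
  { unfold dt. auto_derive.
    - apply f_t; lra.
    - ring. }
  destruct (is_derive_neg_left _ r _ hder) as [eta [heta Hleft]].
  { rewrite hflow, hds. nra. }
  exists (Rmax (r - eta / 2) (r / 2)).
  pose proof (Rmax_l (r - eta / 2) (r / 2)). pose proof (Rmax_r (r - eta / 2) (r / 2)).
  assert (Rmax (r - eta / 2) (r / 2) < r) by (apply Rmax_lub_lt; lra).
  split; [lra|]. apply Hleft. lra.
Qed.

Lemma top_component_left_increase (phi f g h : R -> R -> R) (T r k : R) :
  regular phi T -> regular f T -> regular g T -> regular h T ->
  0 < r < T -> k < 4 -> chat g r <= chat f r -> chat h r <= chat f r ->
  (forall z, exists Q, dt f z r = dss phi f z r + ds phi f z r * Q
                                  + reaction (g z r) (h z r) (f z r)) ->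
  exists s, 0 <= s < r /\ chat f r ^ 2 + k * r < chat f s ^ 2 + k * s.
Proof.
  intros regphi regf regg regh hr hk hg hh hflow.
  assert (hr0 : 0 <= r < T) by lra.
  destruct (regular_slice_max_attained r regf hr0)
    as [zm hzm].
  rewrite (chat_eq_max f r zm hzm) in *.
  destruct (hflow zm) as [Q hQ].
  destruct (sq_left_increase_at_max phi f T r k zm Q _ regphi regf hr hzm hQ)
    as [s [hs hinc]].
  { pose proof (regular_le_chat zm r regg hr0).
    pose proof (regular_le_chat zm r regh hr0).
    pose proof (reaction_bound (g zm r) (h zm r) (f zm r)
                  (regular_pos regg zm r hr0) (regular_pos regh zm r hr0)
                  ltac:(lra) ltac:(lra)).
    lra. }
  exists s. split; [exact hs|].
  assert (hs0 : 0 <= s < T) by lra.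
  pose proof (regular_le_chat zm s regf hs0).
  pose proof (regular_pos regf zm s hs0).
  assert (f zm s ^ 2 <= chat f s ^ 2) by (apply pow_incr; lra).
  lra.
Qed.

Section RicciFlow.

Variables (phi a b c : R -> R -> R) (T : R).
Hypothesis flow : ricci_flow_S1S3 phi a b c T.

Lemma ricci_flow_reaction_form (z r : R) : 0 < r < T ->
  (exists Q, dt a z r = dss phi a z r + ds phi a z r * Q + reaction (b z r) (c z r) (a z r)) /\
  (exists Q, dt b z r = dss phi b z r + ds phi b z r * Q + reaction (a z r) (c z r) (b z r)) /\
  (exists Q, dt c z r = dss phi c z r + ds phi c z r * Q + reaction (a z r) (b z r) (c z r)).
Proof.
  intros hr. destruct flow as [_ [_ [_ [_ eqs]]]].
  destruct (eqs z r hr) as [_ [ea [eb ec]]]. unfold reaction.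
  split; [|split]; eexists; [rewrite ea | rewrite eb | rewrite ec]; f_equal;
    unfold Rdiv; do 2 f_equal; ring.
Qed.

Definition cmax (t : R) : R := Rmax (chat a t) (Rmax (chat b t) (chat c t)).

Lemma cmax_continuous_on : continuous_on (fun s => 0 <= s < T) cmax.
Proof.
  destruct flow as [_ [rega [regb [regc _]]]].
  unfold cmax. repeat apply continuous_on_Rmax;
    apply chat_continuous_on; apply regular_jcont0 || apply regular_periodic; assumption.
Qed.

Lemma le_cmax (t : R) : chat a t <= cmax t /\ chat b t <= cmax t /\ chat c t <= cmax t.
Proof.
  unfold cmax. split; [apply Rmax_l | split].
  - eapply Rle_trans; [apply Rmax_l | apply Rmax_r].
  - eapply Rle_trans; [apply Rmax_r | apply Rmax_r].
Qed.

Lemma cmax_sq_left_increase (k r : R) :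
  k < 4 -> 0 < r < T -> exists s, 0 <= s < r /\ cmax r ^ 2 + k * r < cmax s ^ 2 + k * s.
Proof.
  intros hk hr. destruct flow as [regphi [rega [regb [regc _]]]].
  assert (lift : forall f, regular f T -> cmax r = chat f r -> (forall s, chat f s <= cmax s) ->
            (exists s, 0 <= s < r /\ chat f r ^ 2 + k * r < chat f s ^ 2 + k * s) ->
            exists s, 0 <= s < r /\ cmax r ^ 2 + k * r < cmax s ^ 2 + k * s).
  { intros f regf htop hle [s [hs hinc]]. exists s. split; [exact hs|].
    assert (chat f s ^ 2 <= cmax s ^ 2).
    { apply pow_incr. split; [|apply hle]. left. apply (chat_pos s regf). lra. }
    rewrite htop. lra. }
  pose proof (le_cmax r) as [ha [hb hc]].
  assert (hcases : cmax r = chat a r \/ cmax r = chat b r \/ cmax r = chat c r).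
  { unfold cmax. apply Rmax_case; [left | right; apply Rmax_case; [left | right]]; reflexivity. }
  destruct hcases as [ha' | [hb' | hc']].
  - apply (lift a rega ha' (fun s => proj1 (le_cmax s))).
    apply (top_component_left_increase phi a b c T r k); auto; try lra.
    intros z. apply (ricci_flow_reaction_form z r hr).
  - apply (lift b regb hb' (fun s => proj1 (proj2 (le_cmax s)))).
    apply (top_component_left_increase phi b a c T r k); auto; try lra.
    intros z. apply (ricci_flow_reaction_form z r hr).
  - apply (lift c regc hc' (fun s => proj2 (proj2 (le_cmax s)))).
    apply (top_component_left_increase phi c a b T r k); auto; try lra.
    intros z. apply (ricci_flow_reaction_form z r hr).
Qed.

Lemma cmax_sq_decay (k t : R) :
  k < 4 -> 0 <= t < T -> cmax t ^ 2 + k * t <= cmax 0 ^ 2.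
Proof.
  intros hk ht.
  replace (cmax 0 ^ 2) with (cmax 0 ^ 2 + k * 0) by ring.
  apply (le_initial_of_left_increase (fun s => cmax s ^ 2 + k * s) T); [| |exact ht].
  - apply continuous_on_plus.
    + apply continuous_on_pow, cmax_continuous_on.
    + apply continuous_on_mult; [apply continuous_on_const | apply continuous_on_id].
  - intros r hr. now apply cmax_sq_left_increase.
Qed.

Lemma cmax_initial :
  0 < T -> (forall z, a z 0 <= b z 0 /\ b z 0 <= c z 0) -> cmax 0 = chat c 0.
Proof.
  intros hT hord. destruct flow as [_ [rega [regb [regc _]]]].
  assert (h0 : 0 <= 0 < T) by lra.
  assert (hc : forall z, c z 0 <= chat c 0)
    by (intros z; exact (regular_le_chat z 0 regc h0)).
  destruct (regular_slice_max_attained 0 rega h0) as [za hza].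
  destruct (regular_slice_max_attained 0 regb h0) as [zb hzb].
  unfold cmax. rewrite (chat_eq_max a 0 za hza), (chat_eq_max b 0 zb hzb).
  pose proof (hord za). pose proof (hord zb). pose proof (hc za). pose proof (hc zb).
  rewrite (Rmax_right (b zb 0)) by lra. apply Rmax_right. lra.
Qed.

End RicciFlow.

Theorem lemma4p3 (phi a b c : R -> R -> R) (T : R) :
  0 < T ->
  ricci_flow_S1S3 phi a b c T ->
  (forall z, a z 0 <= b z 0 /\ b z 0 <= c z 0) ->
  forall t, 0 <= t < T -> chat c t ^ 2 <= -4 * t + chat c 0 ^ 2.
Proof.
  intros hT flow hord t ht.
  pose proof flow as [_ [_ [_ [regc _]]]].
  rewrite <- (cmax_initial phi a b c T flow hT hord).
  assert (hct : chat c t ^ 2 <= cmax a b c t ^ 2).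
  { apply pow_incr. split.
    - left. exact (chat_pos t regc ht).
    - apply le_cmax. }
  apply Rle_plus_epsilon. intros eps heps.
  assert (hdelta : 0 < eps / (t + 1)) by (apply Rdiv_lt_0_compat; lra).
  pose proof (cmax_sq_decay phi a b c T flow (4 - eps / (t + 1)) t ltac:(lra) ht) as hdecay.
  replace ((4 - eps / (t + 1)) * t) with (4 * t - eps + eps / (t + 1)) in hdecay
    by (field; lra).
  lra.
Qed.
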